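(* Let $N\ge1$, $p,q>0$ with $p+q=1$. Let $P'_{Y'}(X';t)$ be the transition probability of the AZRP with $N$ particles from $Y'$ to $X'$ at time $t$, and $P_Y(X;t)$ the transition probability of the ASEP with $N$ particles from $Y$ to $X$ at time $t$. Define $f(x_1,\dots,x_N)=(x_1+1,x_2+2,\dots,x_N+N)$, a bijection from $\{x_1\le\cdots\le x_N\}\subset\mathbb{Z}^N$ onto $\{x_1<\cdots<x_N\}\subset\mathbb{Z}^N$. Then for all $X',Y'$ with weakly increasing coordinates and all $t\ge0$, $P'_{Y'}(X';t)=P_{f(Y')}(f(X');t)$.
   Context: AZRP: any number of particles may occupy a site of $\mathbb{Z}$; from each occupied site one particle leaves at rate $1$, moving to the right neighbor with probability $p$ and to the left neighbor with probability $q$; configurations are the ordered positions $x_1\le\cdots\le x_N$. ASEP (asymmetric simple exclusion process): at most one particle per site; each particle jumps one step to the right at rate $p$ and one step to the left at rate $q$, a jump being suppressed if the target site is occupied; configurations are $x_1<\cdots<x_N$. *)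

From Stdlib Require Import Reals ZArith List Lia Lra Sorted.
From Coquelicot Require Import Coquelicot.
Open Scope R_scope.

(* Configurations of N particles: lists of integer positions x_1, ..., x_N
   (index 0 of the list is x_1). *)

Definition upd (x : list Z) (i : nat) (v : Z) : list Z :=
  firstn i x ++ v :: skipn (S i) x.

Definition asep_out (p q : R) (x : list Z) : list (list Z * R) :=
  flat_map (fun i =>
    let xi := nth i x 0%Z in
    (if existsb (Z.eqb (xi + 1)%Z) x then nil else (upd x i (xi + 1)%Z, p) :: nil)
    ++ (if existsb (Z.eqb (xi - 1)%Z) x then nil else (upd x i (xi - 1)%Z, q) :: nil))
    (seq 0 (length x)).

(* AZRP on ordered configurations x_1 <= ... <= x_N: from each occupied site a
   one particle leaves at rate 1, to a+1 w.p. p, to a-1 w.p. q.  In the ordered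
   labelling, a right jump from site a moves the rightmost particle at a
   (index i with i = N or x_{i+1} > x_i) and a left jump moves the leftmost
   particle at a (index i with i = 1 or x_{i-1} < x_i). *)
Definition azrp_out (p q : R) (x : list Z) : list (list Z * R) :=
  flat_map (fun i =>
    let xi := nth i x 0%Z in
    (if orb (Nat.eqb (S i) (length x)) (Z.ltb xi (nth (S i) x 0%Z))
     then (upd x i (xi + 1)%Z, p) :: nil else nil)
    ++ (if orb (Nat.eqb i 0) (Z.ltb (nth (i - 1) x 0%Z) xi)
        then (upd x i (xi - 1)%Z, q) :: nil else nil))
    (seq 0 (length x)).

Definition rate_total (out : list (list Z * R)) : R :=
  fold_right (fun zr acc => snd zr + acc) 0 out.

(* Entries of the k-th power of the generator Q:
   Q(y,z) = rate of jump y -> z for z <> y, Q(y,y) = - total rate out of y. *)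
Fixpoint Qpow (out : list Z -> list (list Z * R)) (k : nat) (y x : list Z) : R :=
  match k with
  | O => if list_eq_dec Z.eq_dec y x then 1 else 0
  | S k' => fold_right (fun zr acc => snd zr * Qpow out k' (fst zr) x + acc) 0 (out y)
            - rate_total (out y) * Qpow out k' y x
  end.

Definition trans_prob (out : list Z -> list (list Z * R)) (y x : list Z) (t : R) : R :=
  Series (fun k => t ^ k / INR (fact k) * Qpow out k y x).

Definition azrp_P (p q : R) (y x : list Z) (t : R) : R := trans_prob (azrp_out p q) y x t.
Definition asep_P (p q : R) (y x : list Z) (t : R) : R := trans_prob (asep_out p q) y x t.

Fixpoint shift_from (x : list Z) (k : Z) : list Z :=
  match x with
  | nil => nil
  | a :: r => (a + k)%Z :: shift_from r (k + 1)%Z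
  end.
Definition fmap (x : list Z) : list Z := shift_from x 1%Z.

(* Under x |-> f(x) = (x_1+1, ..., x_N+N), two AZRP particles sharing a site
   become ASEP neighbours at distance one, and a gap of size d+1 between
   sites becomes a gap of size d+2 in the image.  Hence the AZRP particle
   allowed to jump right from a site (the rightmost one there) is exactly the
   ASEP particle whose right neighbour site is free, and symmetrically on the
   left; the jump rates agree, so the generators, their powers and the
   exponential series defining the transition probabilities agree entry by
   entry. *)
From Stdlib Require Import Reals ZArith List Sorted Lia Lra.
From Coquelicot Require Import Coquelicot.
Open Scope R_scope.

Section Qpow_relabel.

Variables (out1 out2 : list Z -> list (list Z * R)) (f : list Z -> list Z)
  (P : list Z -> Prop).
Hypothesis f_inj : forall x y, f x = f y -> x = y.
Hypothesis out_relabel :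
  forall y, P y -> out2 (f y) = map (fun zr => (f (fst zr), snd zr)) (out1 y).
Hypothesis out_invariant :
  forall y, P y -> List.Forall (fun zr => P (fst zr)) (out1 y).

Lemma Qpow_relabel k x y : P y -> Qpow out1 k y x = Qpow out2 k (f y) (f x).
Proof.
  revert y; induction k as [|k IH]; intros y Py; simpl.
  - destruct (list_eq_dec Z.eq_dec (f y) (f x)) as [e|ne];
      destruct (list_eq_dec Z.eq_dec y x) as [->|ne_yx]; auto.
    + exfalso; apply ne_yx, f_inj, e.
    + exfalso; apply ne; reflexivity.
  - rewrite (out_relabel y Py), <- (IH y Py).
    pose proof (out_invariant y Py) as Hinv; unfold rate_total.
    induction (out1 y) as [|zr l IHl]; simpl; [reflexivity|].
    inversion_clear Hinv as [|? ? Pz Hl].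
    rewrite <- (IH _ Pz); specialize (IHl Hl); lra.
Qed.

Lemma trans_prob_relabel x y t :
  P y -> trans_prob out1 y x t = trans_prob out2 (f y) (f x) t.
Proof.
  intro Py; unfold trans_prob; apply Series_ext; intro k.
  now rewrite (Qpow_relabel k x y Py).
Qed.

End Qpow_relabel.

Open Scope Z_scope.

Definition nondecreasing (y : list Z) : Prop :=
  forall j k, (j <= k < length y)%nat -> nth j y 0 <= nth k y 0.

Definition increasing (s : list Z) : Prop :=
  forall j k, (j < k < length s)%nat -> nth j s 0 < nth k s 0.

Lemma Sorted_nondecreasing y : Sorted Z.le y -> nondecreasing y.
Proof.
  intro Hs; apply Sorted_StronglySorted in Hs; [|intros a b c; lia].
  induction Hs as [|a l _ IH Hhd]; intros j k Hjk; simpl in *; [lia|].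
  destruct j as [|j], k as [|k]; try lia.
  - rewrite List.Forall_forall in Hhd; apply Hhd, nth_In; lia.
  - apply IH; lia.
Qed.

Lemma length_shift_from y k : length (shift_from y k) = length y.
Proof. revert k; induction y; intros; simpl; auto. Qed.

Lemma nth_shift_from y : forall k j, (j < length y)%nat ->
  nth j (shift_from y k) 0 = nth j y 0 + k + Z.of_nat j.
Proof.
  induction y as [|a y IH]; intros k j Hj; simpl in *; [lia|].
  destruct j as [|j]; [lia|]. rewrite IH by lia. lia.
Qed.

Lemma length_fmap y : length (fmap y) = length y.
Proof. apply length_shift_from. Qed.

Lemma nth_fmap y j : (j < length y)%nat -> nth j (fmap y) 0 = nth j y 0 + 1 + Z.of_nat j.
Proof. apply nth_shift_from. Qed.

Lemma fmap_inj x y : fmap x = fmap y -> x = y.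
Proof.
  unfold fmap; generalize 1; revert y.
  induction x as [|a x IH]; intros [|b y] k E; simpl in E; try discriminate; auto.
  injection E as Ehd Etl; f_equal; [lia | eauto].
Qed.

Lemma fmap_increasing y : nondecreasing y -> increasing (fmap y).
Proof.
  intros Hy j k Hjk; rewrite length_fmap in Hjk.
  rewrite !nth_fmap by lia.
  assert (nth j y 0 <= nth k y 0) by (apply Hy; lia); lia.
Qed.

Lemma existsb_eqb_nth a l :
  existsb (Z.eqb a) l = true <-> exists j, (j < length l)%nat /\ nth j l 0 = a.
Proof.
  rewrite existsb_exists; split.
  - intros [x [Hx Ex]]; apply Z.eqb_eq in Ex; subst x.
    destruct (In_nth _ _ 0 Hx) as [n [Hn En]]; eauto.
  - intros [j [Hj <-]]; exists (nth j l 0); split; [apply nth_In; auto | apply Z.eqb_refl].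
Qed.

Lemma increasing_succ_mem s i : increasing s -> (i < length s)%nat ->
  existsb (Z.eqb (nth i s 0 + 1)) s =
  (Nat.ltb (S i) (length s) && Z.eqb (nth (S i) s 0) (nth i s 0 + 1))%bool.
Proof.
  intros Hs Hi; apply Bool.eq_iff_eq_true.
  rewrite existsb_eqb_nth, Bool.andb_true_iff, Nat.ltb_lt, Z.eqb_eq; split.
  - intros [j [Hj Ej]].
    destruct (Nat.lt_trichotomy j (S i)) as [lt|[->|gt]]; [| lia |].
    + destruct (Nat.eq_dec j i) as [->|]; [lia|].
      specialize (Hs j i); lia.
    + pose proof (Hs i (S i)); pose proof (Hs (S i) j); lia.
  - intros [Hlt E]; eauto.
Qed.

Lemma increasing_pred_mem s i : increasing s -> (i < length s)%nat ->
  existsb (Z.eqb (nth i s 0 - 1)) s =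
  (Nat.ltb 0 i && Z.eqb (nth (i - 1) s 0) (nth i s 0 - 1))%bool.
Proof.
  intros Hs Hi; apply Bool.eq_iff_eq_true.
  rewrite existsb_eqb_nth, Bool.andb_true_iff, Nat.ltb_lt, Z.eqb_eq; split.
  - intros [j [Hj Ej]].
    destruct (Nat.lt_trichotomy j (i - 1)) as [lt|[->|gt]].
    + pose proof (Hs j (i - 1)%nat); pose proof (Hs (i - 1)%nat i); lia.
    + destruct (Nat.eq_dec i 0) as [->|]; [simpl in Ej; lia | lia].
    + destruct (Nat.eq_dec j i) as [->|]; [lia|].
      specialize (Hs i j); lia.
  - intros [Hlt E]; exists (i - 1)%nat; split; [lia | exact E].
Qed.

Lemma length_upd y i v : (i < length y)%nat -> length (upd y i v) = length y.
Proof.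
  intro Hi; unfold upd.
  rewrite length_app, length_firstn, length_cons, length_skipn; lia.
Qed.

Lemma nth_upd y i v j : (i < length y)%nat ->
  nth j (upd y i v) 0 = if Nat.eqb j i then v else nth j y 0.
Proof.
  revert i j; induction y as [|a y IH]; intros i j Hi; simpl in *; [lia|].
  destruct i as [|i]; [destruct j; reflexivity|].
  change (upd (a :: y) (S i) v) with (a :: upd y i v).
  destruct j as [|j]; [reflexivity|]; simpl; apply IH; lia.
Qed.

Lemma upd_fmap y i d : (i < length y)%nat ->
  upd (fmap y) i (nth i (fmap y) 0 + d) = fmap (upd y i (nth i y 0 + d)).
Proof.
  intro Hi; unfold fmap.
  assert (Hf : (i < length (shift_from y 1))%nat) by (rewrite length_shift_from; auto).
  apply nth_ext with (d := 0) (d' := 0).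
  - rewrite length_upd, !length_shift_from, length_upd; auto.
  - intros n Hn; rewrite length_upd, length_shift_from in Hn by auto.
    rewrite nth_upd, !nth_shift_from, nth_upd by (rewrite ?length_upd; lia).
    destruct (Nat.eqb_spec n i); subst; lia.
Qed.

Lemma upd_nondecreasing y i v : nondecreasing y -> (i < length y)%nat ->
  ((0 < i)%nat -> nth (i - 1) y 0 <= v) ->
  ((S i < length y)%nat -> v <= nth (S i) y 0) ->
  nondecreasing (upd y i v).
Proof.
  intros Hy Hi Hleft Hright j k Hjk; rewrite length_upd in Hjk by auto.
  rewrite !nth_upd by auto.
  destruct (Nat.eqb_spec j i), (Nat.eqb_spec k i); subst; try lia.
  - pose proof (Hright ltac:(lia)); pose proof (Hy (S i) k); lia.
  - pose proof (Hleft ltac:(lia)); pose proof (Hy j (i - 1)%nat); lia.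
  - apply Hy; lia.
Qed.

Lemma azrp_right_free_iff y i : nondecreasing y -> (i < length y)%nat ->
  (Nat.eqb (S i) (length y) || Z.ltb (nth i y 0) (nth (S i) y 0))%bool =
  negb (existsb (Z.eqb (nth i (fmap y) 0 + 1)) (fmap y)).
Proof.
  intros Hy Hi.
  rewrite increasing_succ_mem by (rewrite ?length_fmap; auto using fmap_increasing).
  rewrite length_fmap.
  destruct (Nat.eqb_spec (S i) (length y)) as [E|ne]; simpl.
  - rewrite E, Nat.ltb_irrefl; reflexivity.
  - assert (Hle : nth i y 0 <= nth (S i) y 0) by (apply Hy; lia).
    rewrite (proj2 (Nat.ltb_lt _ _)), Bool.andb_true_l, !nth_fmap by lia.
    destruct (Z.ltb_spec (nth i y 0) (nth (S i) y 0)); case Z.eqb_spec; lia.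
Qed.

Lemma azrp_left_free_iff y i : nondecreasing y -> (i < length y)%nat ->
  (Nat.eqb i 0 || Z.ltb (nth (i - 1) y 0) (nth i y 0))%bool =
  negb (existsb (Z.eqb (nth i (fmap y) 0 - 1)) (fmap y)).
Proof.
  intros Hy Hi.
  rewrite increasing_pred_mem by (rewrite ?length_fmap; auto using fmap_increasing).
  destruct (Nat.eqb_spec i 0) as [->|ne]; [reflexivity|]; simpl.
  assert (Hle : nth (i - 1) y 0 <= nth i y 0) by (apply Hy; lia).
  rewrite (proj2 (Nat.ltb_lt 0 i)), Bool.andb_true_l, !nth_fmap by lia.
  destruct (Z.ltb_spec (nth (i - 1) y 0) (nth i y 0)); case Z.eqb_spec; lia.
Qed.

Open Scope R_scope.

Lemma asep_out_fmap p q y : nondecreasing y ->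
  asep_out p q (fmap y) = map (fun zr => (fmap (fst zr), snd zr)) (azrp_out p q y).
Proof.
  intro Hy; unfold asep_out, azrp_out; rewrite length_fmap.
  rewrite !flat_map_concat_map, concat_map, map_map; f_equal.
  apply map_ext_in; intros i Hi; apply in_seq in Hi.
  rewrite azrp_right_free_iff, azrp_left_free_iff by (auto; lia).
  rewrite map_app; f_equal.
  - destruct existsb; simpl; [reflexivity|].
    rewrite upd_fmap by lia; reflexivity.
  - destruct existsb; simpl; [reflexivity|].
    rewrite <- !Z.add_opp_r, upd_fmap by lia; reflexivity.
Qed.

Lemma azrp_out_nondecreasing p q y : nondecreasing y ->
  List.Forall (fun zr => nondecreasing (fst zr)) (azrp_out p q y).
Proof.
  intro Hy; unfold azrp_out; apply List.Forall_forall; intros zr Hzr.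
  apply in_flat_map in Hzr; destruct Hzr as [i [Hi Hzr]]; apply in_seq in Hi.
  apply in_app_or in Hzr; destruct Hzr as [Hzr|Hzr].
  - destruct (_ || _)%bool eqn:E; [|destruct Hzr].
    destruct Hzr as [<-|[]]; simpl.
    apply Bool.orb_true_iff in E; rewrite Nat.eqb_eq, Z.ltb_lt in E.
    apply upd_nondecreasing; auto; try lia.
    intros; pose proof (Hy (i - 1)%nat i); lia.
  - destruct (_ || _)%bool eqn:E; [|destruct Hzr].
    destruct Hzr as [<-|[]]; simpl.
    apply Bool.orb_true_iff in E; rewrite Nat.eqb_eq, Z.ltb_lt in E.
    apply upd_nondecreasing; auto; try lia.
    intros; pose proof (Hy i (S i)); lia.
Qed.

Theorem mainTheorem3 (N : nat) (p q t : R) (X' Y' : list Z) :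
  (1 <= N)%nat -> 0 < p -> 0 < q -> p + q = 1 ->
  length X' = N -> length Y' = N ->
  Sorted Z.le X' -> Sorted Z.le Y' ->
  0 <= t ->
  azrp_P p q Y' X' t = asep_P p q (fmap Y') (fmap X') t.
Proof.
  intros _ _ _ _ _ _ _ HY' _.
  apply trans_prob_relabel with (P := nondecreasing).
  - exact fmap_inj.
  - apply asep_out_fmap.
  - apply azrp_out_nondecreasing.
  - exact (Sorted_nondecreasing Y' HY').
Qed.
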